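(* Let $D$ be a decorated tangle diagram and let $e$ and $f$ be two oriented edges lying on the same strand of $D$, with orientations compatible along that strand. Then the endomorphisms of $C(D)$ given by multiplication by $x_e$ and by $x_f$ are $1$-homotopic.
   Context: Conventions. All rings and modules are bigraded by an internal grading and a filtration grading; rings are concentrated in nonpositive even internal degree and filtration degree $0$. For a module $M$, $M\{i,j\}$ is $M$ with gradings shifted so that an element of bidegree $(a,b)$ in $M$ has bidegree $(a+i,b+j)$, and $M\{i\}=M\{i,0\}$; the internal grading is used for Koszul signs (a shift by an odd internal amount negates the differential). For a ring $R$ and homogeneous $w\in R$ of bidegree $(2k_0,0)$ with $k_0$ odd (here $k_0=-3$), a multifactorization of $w$ is an $R$-module $C$ with $R$-linear maps $d_i:C\to C$ ($i\ge0$) of bidegree $(k_0,i)$ such that $D=\sum_id_i$ satisfies $D^2=w$. A chain map is $F=\sum_{i\ge0}f_i$ with $f_i$ of bidegree $(0,i)$ and $FD=D'F$. An $n$-homotopy between chain maps $F,G$ is $H=\sum_{i\ge-n}h_i$ with $h_i$ of bidegree $(-k_0,i)$ and $F-G=HD+D'H$. For homogeneous $a,b\in R$ of bidegrees $(2i,0),(2j,0)$, the Koszul factorization $K(a,b)$ is $R\{i-j\}e\oplus Rf$ with $d(e)=af$, $d(f)=be$; tensor products are over $R$ with differential $d\otimes1+1\otimes d$ and Koszul signs. Decorated diagrams. A decorated diagram $D$ of a tangle consists of a tangle diagram $D^\circ$ in a disc together with finitely many disjoint dotted arcs meeting $D^\circ$ only in their endpoints such that $D^\circ\cup(\text{arcs})$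 is connected; a labeling of each region of the complement of $D^\circ\cup(\text{arcs})$ by a distinct variable $x_1,\dots,x_m$ of bidegree $(-2,0)$; and a marked adjacent edge near each crossing and arc (only affecting signs). $R(D)\subset\mathbb Z[x_1,\dots,x_m]$ is generated by all differences $x_i-x_j$; for an oriented edge $e$, $x_e=x_\ell-x_r$ ($x_\ell,x_r$ the labels of regions to its left and right). Each crossing and each dotted arc lies in a small disc meeting the diagram in four points, with boundary-touching regions labeled $x_0,x_1,x_2,x_3$ in cyclic order; $c=x_1-x_2+x_3-x_0$. $D_0$: two strands cutting off $x_1$ and $x_3$, joined by a dotted arc separating $x_0$ from $x_2$; $D_1$: strands cutting off $x_0$ and $x_2$, arc separating $x_1$ from $x_3$. $C(D_0)=K(x_0-x_2,(x_1-x_3)c)$ (generators $e,f$), $C(D_1)=K(x_1-x_3,(x_0-x_2)c)$ (generators $e',f'$). Saddle maps: $s_{0\to1}:C(D_0)\to C(D_1)\{1\}$, $e\mapsto-f'$, $f\mapsto ce'$; $s_{1\to0}:C(D_1)\to C(D_0)\{1\}$, $e'\mapsto-f$, $f'\mapsto ce$. A crossing, labeled so that $D_0$ is its oriented resolution, gets: if positive, $C(D_0)\{1\}\oplus C(D_1)\{-1,1\}$ with $d_1=s_{0\to1}$ from first to second summand and $d_i=0$ for $i\ge2$; if negative, $C(D_1)\{1\}\oplus C(D_0)\{-1,1\}$ with $d_1=s_{1\to0}$. A dotted arc contributes $C(D_0)$. $C(D)=\bigotimes_{R(D)}(C(D_e)\otimes_{R(D_e)}R(D))$ over these elementary pieces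 $D_e$, a multifactorization of $\frac13\sum_{e\in\partial D}x_e^3$ (edges meeting the boundary, oriented inward). *)

From mathcomp Require Import all_boot all_algebra.
From mathcomp Require Export mpoly.

Unset Printing Implicit Defensive.

Import GRing.Theory.
Local Open Scope ring_scope.

(* A variable x_i has bidegree (-2,0); hence a polynomial that is           *)
(* homogeneous of total degree k has bidegree (-2k,0).                       *)
(* A (finite rank, free) multifactorization is given by a homogeneous basis *)
(* [mbas] with internal degrees [mideg] and filtration degrees [mfdeg], and *)
(* the matrix [mdif u v] = coefficient of the basis vector v in D(u), where *)
(* D = sum_i d_i.                                                           *)

Definition k0 : int := -3.

Record mfact (R : Type) : Type := MFact {
  mbas : finType;
  mideg : mbas -> int;
  mfdeg : mbas -> int;
  mdif : mbas -> mbas -> R }.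
Arguments mbas {R}.
Arguments mideg {R}.
Arguments mfdeg {R}.
Arguments mdif {R}.

Definition sgnz {R : pzRingType} (z : int) : R := if odd `|z|%N then -1 else 1.

(* A module map C -> C{s} is given by its matrix M (M u v = coefficient of  *)
(* v in M(u)).  [n_homotopic S n C s F G] : the maps F, G : C -> C{s} are   *)
(* n-homotopic, i.e. there is an S-linear H = sum_(i >= -n) h_i, h_i of     *)
(* bidegree (-k0, i) as a map C -> C{s}, with F - G = H D + D' H, where     *)
(* D' = (-1)^s D is the differential of C{s}.  Since the basis is           *)
(* homogeneous, H = sum_(i>=-n) h_i with h_i of bidegree (-k0,i) means       *)
(* exactly: each nonzero entry H u v is homogeneous of some degree k with   *)
(* (mideg v + s - 2k) - mideg u = -k0 and mfdeg v - mfdeg u >= -n          *)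
(* (h_i is then the part of H with mfdeg v - mfdeg u = i).                  *)
Definition n_homotopic {m : nat} (S : {mpoly int[m]} -> Prop) (n : nat)
    (C : mfact {mpoly int[m]}) (s : int)
    (F G : mbas C -> mbas C -> {mpoly int[m]}) : Prop :=
  exists H : mbas C -> mbas C -> {mpoly int[m]},
    [/\ forall u v, S (H u v),
        forall u v, H u v != 0 ->
          (- (n%:Z) <= mfdeg C v - mfdeg C u)%R /\
          exists k : nat, H u v \is k.-homog for mdeg /\
                          mideg C v + s - 2 * k%:Z - mideg C u = - k0
      & forall u w,
          F u w - G u w =
            \sum_(v : mbas C) mdif C u v * H v w
            + sgnz s * \sum_(v : mbas C) H u v * mdif C v w ].

Definition mulmx_map {R : pzRingType} (B : finType) (x : R) : B -> B -> R :=
  fun u v => if u == v then x else 0.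

Inductive inRD {m : nat} : {mpoly int[m]} -> Prop :=
  | RD_one : inRD 1
  | RD_diff (i j : 'I_m) : inRD ('X_i - 'X_j)
  | RD_opp p : inRD p -> inRD (- p)
  | RD_add p q : inRD p -> inRD q -> inRD (p + q)
  | RD_mul p q : inRD p -> inRD q -> inRD (p * q).

(* Pieces (crossings and dotted arcs) are indexed by 'I_npc.  For a piece p *)
(* [lab p k] (k = 0..3) is the region labelling x_0,...,x_3 of its small    *)
(* disc, in counterclockwise cyclic order (labelled, for crossings, so that *)
(* D_0 is the oriented resolution; the rotation by the marked edge is part  *)
(* of this data).  Port (p,k) is the point of the small disc's boundary     *)
(* between regions x_k and x_(k+1 mod 4).  D_0 joins ports 0-1 (cutting off *)
(* x_1) and 2-3 (cutting off x_3); for a dotted arc the strands of D run    *)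
(* exactly like this, for a crossing they go straight through (k <-> k+2).  *)
(* Edges of D (segments between crossings / arc endpoints) are 'I_ned,      *)
(* oriented by the orientation of the tangle, from [src e] to [tgt e]       *)
(* (None = the boundary of the big disc); [lft e], [rgt e] are the regions  *)
(* to their left / right.                                                   *)

Inductive pkind := Arc | PosX | NegX.

Record ddiag := DDiag {
  nreg : nat;
  npc : nat;
  ned : nat;
  kind : 'I_npc -> pkind;
  lab : 'I_npc -> 'I_4 -> 'I_nreg;
  src : 'I_ned -> option ('I_npc * 'I_4);
  tgt : 'I_ned -> option ('I_npc * 'I_4);
  lft : 'I_ned -> 'I_nreg;
  rgt : 'I_ned -> 'I_nreg }.
Arguments kind : clear implicits.
Arguments lab : clear implicits.
Arguments src : clear implicits.
Arguments tgt : clear implicits.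
Arguments lft : clear implicits.
Arguments rgt : clear implicits.

Definition succ4 (k : 'I_4) : 'I_4 := inord ((k.+1) %% 4).

(* the port through which a strand leaves piece of kind c after entering at k *)
Definition strand_next (c : pkind) (k : 'I_4) : 'I_4 :=
  match c with
  | Arc => inord (if odd k then k.-1 else k.+1)
  | _ => inord ((k + 2) %% 4)
  end.

Definition inport (D : ddiag) (p : 'I_(npc D)) (k : 'I_4) : bool :=
  [exists e, tgt D e == Some (p, k)].

Definition wf_ddiag (D : ddiag) : Prop :=
  [/\
      forall p k, (#|[pred e | src D e == Some (p, k)]|
                   + #|[pred e | tgt D e == Some (p, k)]|)%N = 1%N,
      (* orientation: strands through a dotted arc (0-1, 2-3) are oriented
         consistently; at a crossing, the strands (0-2, 1-3) are oriented so
         that D_0 (joining 0-1, 2-3) is the oriented resolution *)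
      forall p, match kind D p with
        | Arc => (inport D p 0 != inport D p 1) && (inport D p (inord 2) != inport D p (inord 3))
        | _ => [&& inport D p 0, inport D p (inord 3), ~~ inport D p 1 & ~~ inport D p (inord 2)]
               || [&& inport D p 1, inport D p (inord 2), ~~ inport D p 0 & ~~ inport D p (inord 3)]
        end,
      forall e p k, tgt D e = Some (p, k) ->
                    lft D e = lab D p k /\ rgt D e = lab D p (succ4 k),
      forall e p k, src D e = Some (p, k) ->
                    lft D e = lab D p (succ4 k) /\ rgt D e = lab D p k
    &
      forall i, exists e, lft D e = i \/ rgt D e = i ].

Definition strand_succ (D : ddiag) : rel 'I_(ned D) :=
  fun e e' => match tgt D e with
              | Some (p, k) => src D e' == Some (p, strand_next (kind D p) k)
              | None => false
              end.

Definition xe (D : ddiag) (e : 'I_(ned D)) : {mpoly int[nreg D]} :=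
  'X_(lft D e) - 'X_(rgt D e).

(* Local generators of the elementary pieces (a, b, c as in the paper with  *)
(* a0 = x_0 - x_2, a1 = x_1 - x_3, c = x_1 - x_2 + x_3 - x_0):              *)
(*  Arc: C(D_0) = K(a0, a1 c) = R{1} e + R f ; gens 0 = e (1,0), 1 = f (0,0) *)
(*       d e = a0 f, d f = a1 c e.                                           *)
(*  PosX: C(D_0){1} + C(D_1){-1,1}; gens 0 = e (2,0), 1 = f (1,0),           *)
(*       2 = e' (0,1), 3 = f' (-1,1); the odd shifts negate d_0:             *)
(*       d e = -a0 f, d f = -a1 c e, d e' = -a1 f', d f' = -a0 c e',         *)
(*       d_1 = s_{0->1}: e |-> -f', f |-> c e'.                              *)
(*  NegX: C(D_1){1} + C(D_0){-1,1}; gens 0 = e', 1 = f', 2 = e, 3 = f with   *)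
(*       the same bidegrees; d e' = -a1 f', d f' = -a0 c e', d e = -a0 f,    *)
(*       d f = -a1 c e, d_1 = s_{1->0}: e' |-> -f, f' |-> c e.               *)

Definition ngen (c : pkind) : nat := if c is Arc then 2 else 4.

Definition loc_ideg (c : pkind) (i : nat) : int :=
  match c, i with
  | Arc, 0 => 1 | Arc, _ => 0
  | _, 0 => 2 | _, 1 => 1 | _, 2 => 0 | _, _ => -1
  end.

Definition loc_fdeg (c : pkind) (i : nat) : int :=
  match c, i with
  | Arc, _ => 0
  | _, 0 => 0 | _, 1 => 0 | _, _ => 1
  end.

(* coefficient of local generator j in d(local generator i), with region
   variables y0..y3 *)
Definition loc_dif {R : pzRingType} (c : pkind) (y0 y1 y2 y3 : R) (i j : nat) : R :=
  let a0 := y0 - y2 in let a1 := y1 - y3 in let cc := y1 - y2 + y3 - y0 in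
  match c, i, j with
  | Arc, 0, 1 => a0
  | Arc, 1, 0 => a1 * cc
  | PosX, 0, 1 => - a0
  | PosX, 1, 0 => - (a1 * cc)
  | PosX, 2, 3 => - a1
  | PosX, 3, 2 => - (a0 * cc)
  | PosX, 0, 3 => - 1
  | PosX, 1, 2 => cc
  | NegX, 0, 1 => - a1
  | NegX, 1, 0 => - (a0 * cc)
  | NegX, 2, 3 => - a0
  | NegX, 3, 2 => - (a1 * cc)
  | NegX, 0, 3 => - 1
  | NegX, 1, 2 => cc
  | _, _, _ => 0
  end.

(* basis of C(D) = tensor product (over R(D), pieces in index order) of the
   local factorizations: a choice of local generator for each piece *)
Definition CDbasis (D : ddiag) : finType :=
  {g : {ffun 'I_(npc D) -> 'I_4} | [forall p, (g p < ngen (kind D p))%N]}.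

Definition CD_ideg (D : ddiag) (u : CDbasis D) : int :=
  \sum_(p < npc D) loc_ideg (kind D p) (val u p).

Definition CD_fdeg (D : ddiag) (u : CDbasis D) : int :=
  \sum_(p < npc D) loc_fdeg (kind D p) (val u p).

Definition yvar (D : ddiag) (p : 'I_(npc D)) (k : nat) : {mpoly int[nreg D]} :=
  'X_(lab D p (inord k)).

(* differential of the tensor product, with Koszul signs:
   D(u_0 (x) ... (x) u_N) = sum_p (-1)^(sum_(q<p) |u_q|) u_0 (x) .. d u_p .. *)
Definition CD_dif (D : ddiag) (u v : CDbasis D) : {mpoly int[nreg D]} :=
  \sum_(p < npc D)
    if [forall q, (q != p) ==> (val u q == val v q)] then
      sgnz (\sum_(q < npc D | (q < p)%N) loc_ideg (kind D q) (val u q))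
      * loc_dif (kind D p) (yvar D p 0) (yvar D p 1) (yvar D p 2) (yvar D p 3)
                (val u p) (val v p)
    else 0.

Definition CD (D : ddiag) : mfact {mpoly int[nreg D]} :=
  @MFact _ (CDbasis D) (CD_ideg D) (CD_fdeg D) (CD_dif D).

From Pilot Require Import Defs.
From mathcomp Require Import all_boot all_algebra.
From mathcomp Require Import mpoly.
From mathcomp Require Import ring zify.
Local Open Scope ring_scope.
Import GRing.Theory.
Set Implicit Arguments.
Unset Strict Implicit.

(* The complex C(D) is the tensor product, over the pieces p of D (crossings
   and dotted arcs), of small local multifactorizations.  Each of them carries
   an explicit homotopy h_p with d h_p + h_p d = c_p, a scalar: for a dotted
   arc, h(f) = e gives c_p = x_0 - x_2; for a crossing, h(e') = f and
   h(f') = -c e (of filtration degree -1) give c_p = c.  Inserting h_p into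
   the p-th tensor factor with its Koszul sign yields an endomorphism H_p of
   C(D); all local differentials and homotopies are odd, so H_p anticommutes
   with the differentials of the other factors and D H_p + H_p D = c_p.
   Walking along a strand through a piece p changes x_e by +-c_p, so
   x_e - x_f = sum_p z_p c_p with integers z_p, and H = sum_p z_p H_p is the
   required 1-homotopy. *)

Lemma odd_abszD (x y : int) : odd `|(x + y)%R|%N = odd `|x|%N (+) odd `|y|%N.
Proof.
have oddE (k : nat) : odd k = (k %% 2 == 1)%N by rewrite modn2; case: (odd k).
rewrite !oddE.
by case: (`|(x + y)%R|%N %% 2 =P 1)%N; case: (`|x|%N %% 2 =P 1)%N;
   case: (`|y|%N %% 2 =P 1)%N => /= *; lia.
Qed.

Lemma sgnzD (R : pzRingType) (x y : int) : sgnz (x + y) = sgnz x * sgnz y :> R.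
Proof.
by rewrite /sgnz odd_abszD; case: (odd `|x|%N); case: (odd `|y|%N);
   rewrite /= ?mulN1r ?opprK ?mul1r.
Qed.

Lemma sgnzN (R : pzRingType) (x : int) : sgnz (- x) = sgnz x :> R.
Proof. by rewrite /sgnz abszN. Qed.

Lemma sgnz_sqr (R : pzRingType) (x : int) : sgnz x * sgnz x = 1 :> R.
Proof. by rewrite /sgnz; case: (odd _); rewrite ?mulN1r ?opprK ?mul1r. Qed.

Lemma sum_if_unique (T : finType) (R : nmodType) (P : pred T) (F : T -> R) v0 :
  (forall v, P v -> v = v0) ->
  \sum_(v : T) (if P v then F v else 0) = if P v0 then F v0 else 0.
Proof.
move=> uniqP; rewrite -big_mkcond; case: ifP => Pv0.
  rewrite (big_pred1 v0) // => v; apply/idP/idP => [/uniqP ->|/eqP ->] //.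
  exact: eqxx.
by rewrite big_pred0 // => v; apply/negbTE/negP => Pv; move: Pv0; rewrite -(uniqP v Pv) Pv.
Qed.

(* With the local generators of Defs (arc: 0 = e,
   1 = f; crossing: 0 = e, 1 = f, 2 = e', 3 = f' up to the order of the two
   resolutions), [loc_h c y0 y1 y2 y3 i j] is the coefficient of generator j
   in h(generator i), and [loc_scalar] is the scalar c_p with
   d h + h d = c_p. *)
Definition loc_h {R : pzRingType} (c : pkind) (y0 y1 y2 y3 : R) (i j : nat) : R :=
  match c, i, j with
  | Arc, 1, 0 => 1
  | Arc, _, _ => 0
  | _, 2, 1 => 1
  | _, 3, 0 => - (y1 - y2 + y3 - y0)
  | _, _, _ => 0
  end.

Definition loc_scalar {R : pzRingType} (c : pkind) (y0 y1 y2 y3 : R) : R :=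
  match c with Arc => y0 - y2 | _ => y1 - y2 + y3 - y0 end.

(* The local differential and homotopy are odd: they change the parity of the
   internal degree, which is what makes them anticommute across factors. *)
Lemma loc_dif_odd (R : comPzRingType) c (y0 y1 y2 y3 : R) (i j : nat) :
  loc_dif c y0 y1 y2 y3 i j * (sgnz (loc_ideg c i) * sgnz (loc_ideg c j))
  = - loc_dif c y0 y1 y2 y3 i j.
Proof. by case: c; case: i => [|[|[|[|i]]]]; case: j => [|[|[|[|j]]]]; rewrite /sgnz /=; ring. Qed.

Lemma loc_h_odd (R : comPzRingType) c (y0 y1 y2 y3 : R) (i j : nat) :
  loc_h c y0 y1 y2 y3 i j * (sgnz (loc_ideg c i) * sgnz (loc_ideg c j))
  = - loc_h c y0 y1 y2 y3 i j.
Proof. by case: c; case: i => [|[|[|[|i]]]]; case: j => [|[|[|[|j]]]]; rewrite /sgnz /=; ring. Qed.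

Lemma loc_dif_out (R : pzRingType) c (y0 y1 y2 y3 : R) (i j : nat) :
  (ngen c <= j)%N -> loc_dif c y0 y1 y2 y3 i j = 0.
Proof. by case: c; case: i => [|[|[|[|i]]]]; case: j => [|[|[|[|j]]]]. Qed.

Lemma loc_h_out (R : pzRingType) c (y0 y1 y2 y3 : R) (i j : nat) :
  (ngen c <= j)%N -> loc_h c y0 y1 y2 y3 i j = 0.
Proof. by case: c; case: i => [|[|[|[|i]]]]; case: j => [|[|[|[|j]]]]. Qed.

Lemma loc_h_diag (R : pzRingType) c (y0 y1 y2 y3 : R) i : loc_h c y0 y1 y2 y3 i i = 0.
Proof. by case: c; case: i => [|[|[|[|i]]]]. Qed.

Lemma loc_homotopy (R : comPzRingType) c (y0 y1 y2 y3 : R) (i k : nat) :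
  (i < ngen c)%N -> (k < ngen c)%N ->
  \sum_(j < 4) (loc_dif c y0 y1 y2 y3 i j * loc_h c y0 y1 y2 y3 j k
               + loc_h c y0 y1 y2 y3 i j * loc_dif c y0 y1 y2 y3 j k)
  = if i == k then loc_scalar c y0 y1 y2 y3 else 0.
Proof.
rewrite !big_ord_recr big_ord0 /=.
by case: c; case: i => [|[|[|[|i]]]]; case: k => [|[|[|[|k]]]] //= _ _; ring.
Qed.

(* Following a strand through a piece, entering at port k and leaving at
   port k', changes x_e = y_k - y_(k+1) into y_(k'+1) - y_k'; the difference
   is +-c_p. *)
Lemma loc_strand_step (R : comPzRingType) c (y : nat -> R) (k : 'I_4) :
  let k' := strand_next c k in
  (y k - y (succ4 k)) - (y (succ4 k') - y k') = loc_scalar c (y 0) (y 1) (y 2) (y 3)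
  \/ (y k - y (succ4 k)) - (y (succ4 k') - y k') = - loc_scalar c (y 0) (y 1) (y 2) (y 3).
Proof.
case: k => [[|[|[|[|k]]]] hk] //=; rewrite /succ4 /strand_next /=;
  by case: c; rewrite /= !inordK //=; first [left; ring | right; ring].
Qed.

(* A nonzero entry of the local homotopy has filtration degree >= -1 and is
   homogeneous of the internal degree required of a homotopy C -> C{2}. *)
Lemma loc_h_bideg (n : nat) c (a0 a1 a2 a3 : 'I_n) (i j : nat) :
  let h := loc_h c ('X_a0 : {mpoly int[n]}) 'X_a1 'X_a2 'X_a3 i j in
  h != 0 ->
  (- (1%:Z) <= loc_fdeg c j - loc_fdeg c i)%R /\
  exists k : nat, h \is k.-homog for mdeg /\
                  loc_ideg c j + 2 - 2 * k%:Z - loc_ideg c i = - k0.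
Proof.
have homX (a : 'I_n) : ('X_a : {mpoly int[n]}) \is 1.-homog for mdeg.
  by rewrite dhomogX; apply/eqP; exact: mdeg1.
have hom1 : (1 : {mpoly int[n]}) \is 0.-homog for mdeg by exact: dhomog1.
have homc : - ('X_a1 - 'X_a2 + 'X_a3 - 'X_a0 : {mpoly int[n]}) \is 1.-homog for mdeg.
  by rewrite rpredN !(rpredB, rpredD) // homX.
case: c; case: i => [|[|[|[|i]]]]; case: j => [|[|[|[|j]]]]; rewrite /= ?eqxx //= => _;
  split => //; first [by exists 0%N | by exists 1%N].
Qed.

(* The identity behind the anticommutation of odd operators: s1, s2 are
   Koszul signs, and A is odd for the parity signs x, y. *)
Lemma anticomm_cancel (R : comPzRingType) (s1 s2 A B x y : R) :
  A * (y * x) = - A -> s1 * A * (s2 * (x * y) * B) + s2 * B * (s1 * A) = 0.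
Proof.
move=> oddA; transitivity (s1 * s2 * B * (A * (y * x) + A)); first ring.
by rewrite oddA addNr mulr0.
Qed.

Section TensorFactor.

Variable D : ddiag.
Local Notation R := {mpoly int[nreg D]}.
Local Notation B := (CDbasis D).
Implicit Types (p q r : 'I_(npc D)) (u v w : B).

Definition agree_off r u v : bool := [forall q, (q != r) ==> (val u q == val v q)].

Definition koszul_sign r u : R :=
  sgnz (\sum_(q < npc D | (q < r)%N) loc_ideg (kind D q) (val u q)).

Definition tensor_op r (a : nat -> nat -> R) u v : R :=
  if agree_off r u v then koszul_sign r u * a (val u r) (val v r) else 0.

Lemma agree_offP r u v : reflect (forall q, q != r -> val u q = val v q) (agree_off r u v).
Proof.
apply: (iffP forallP) => [h q qr | h q]; first by have /implyP/(_ qr)/eqP := h q.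
by apply/implyP => /h ->.
Qed.

Lemma agree_off_sym r u v : agree_off r u v = agree_off r v u.
Proof. by apply/agree_offP/agree_offP => h q /h ->. Qed.

Lemma agree_off_trans r u v w : agree_off r u v -> agree_off r v w -> agree_off r u w.
Proof. by move=> /agree_offP h1 /agree_offP h2; apply/agree_offP => q hq; rewrite h1 // h2. Qed.

Lemma agree_off_eq r u v : agree_off r u v -> val u r = val v r -> u = v.
Proof.
move=> /agree_offP h hr; apply: val_inj; apply/ffunP => q.
by case: (q =P r) => [->|/eqP qr]; [rewrite hr | rewrite h].
Qed.

Lemma koszul_sign_agree p r u v : agree_off r u v ->
  koszul_sign p v = koszul_sign p u *
    (if (r < p)%N then sgnz (loc_ideg (kind D r) (val v r))
                       * sgnz (loc_ideg (kind D r) (val u r)) else 1).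
Proof.
move/agree_offP=> h; rewrite /koszul_sign; case: ifP => rp.
  rewrite (bigD1 r) //= [X in _ = sgnz X * _](bigD1 r) //=.
  rewrite (eq_bigr (fun q => loc_ideg (kind D q) (val u q))); last first.
    by move=> q /andP [_ qr]; rewrite h.
  set S := \sum_(_ < _ | _) _.
  have -> : loc_ideg (kind D r) (val v r) + S
     = (loc_ideg (kind D r) (val u r) + S)
       + (loc_ideg (kind D r) (val v r) + - loc_ideg (kind D r) (val u r)) by ring.
  by rewrite !sgnzD sgnzN.
rewrite mulr1; congr sgnz; apply: eq_bigr => q qp; rewrite h //.
by apply/eqP => qr; move: qp; rewrite qr rp.
Qed.

(* The basis vector with generator j at r and the generators of u elsewhere
   (u itself if j is out of range). *)
Lemma set_gen_proof r u (j : 'I_4) :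
  [forall q, ([ffun q => if q == r then (if (j < ngen (kind D r))%N then j else val u r)
                         else val u q] q < ngen (kind D q))%N].
Proof.
apply/forallP => q; rewrite ffunE; case: eqP => [->|_].
  by case: ifP => // _; exact: (forallP (valP u) r).
exact: (forallP (valP u) q).
Qed.

Definition set_gen r u j : B :=
  @exist _ (fun g : {ffun 'I_(npc D) -> 'I_4} => [forall p, (g p < ngen (kind D p))%N])
         _ (set_gen_proof r u j).

Lemma set_genE r u j q :
  val (set_gen r u j) q
  = if q == r then (if (j < ngen (kind D r))%N then j else val u r) else val u q.
Proof. by rewrite /= ffunE. Qed.

Lemma agree_off_set_gen r u j : agree_off r u (set_gen r u j).
Proof. by apply/agree_offP => q qr; rewrite set_genE (negbTE qr). Qed.

Lemma sum_agree_off r u (G : nat -> R) :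
  (forall j, (ngen (kind D r) <= j)%N -> G j = 0) ->
  \sum_(v : B) (if agree_off r u v then G (val v r) else 0) = \sum_(j < 4) G j.
Proof.
move=> Gout.
transitivity (\sum_(v : B) \sum_(j < 4)
                (if agree_off r u v && (val v r == j) then G j else 0)).
  apply: eq_bigr => v _.
  rewrite (@sum_if_unique _ _ (fun j : 'I_4 => agree_off r u v && (val v r == j))
                          (fun j : 'I_4 => G j) (val v r)); first by rewrite eqxx andbT.
  by move=> j /andP [_ /eqP].
rewrite exchange_big; apply: eq_bigr => j _.
rewrite (@sum_if_unique _ _ (fun v => agree_off r u v && (val v r == j)) (fun _ => G j)
                        (set_gen r u j)); last first.
  move=> v /andP [uv /eqP vj]; apply: (agree_off_eq (r := r)); last first.
    by rewrite set_genE eqxx -vj (forallP (valP v) r).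
  by apply: agree_off_trans (agree_off_set_gen r u j); rewrite agree_off_sym.
rewrite set_genE eqxx agree_off_set_gen /=.
by case: (ltnP j (ngen (kind D r))) => jr; [rewrite eqxx | rewrite Gout //; case: ifP].
Qed.

Lemma set_gen_at r u w q :
  val (set_gen r u (val w r)) q = if q == r then val w r else val u q.
Proof. by rewrite set_genE; case: eqP => // _; rewrite (forallP (valP w) r). Qed.

Lemma sum_diff_agree_off r u v (F : 'I_(npc D) -> 'I_4 -> int) : agree_off r u v ->
  \sum_(q < npc D) F q (val v q) - \sum_(q < npc D) F q (val u q)
  = F r (val v r) - F r (val u r).
Proof.
move/agree_offP=> h; rewrite (bigD1 r) //= [X in _ - X](bigD1 r) //=.
rewrite (eq_bigr (fun q => F q (val u q))); last by move=> q qr; rewrite h.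
ring.
Qed.

(* Composing two operators on the same factor: the Koszul signs cancel. *)
Lemma tensor_op_comp_same r (a b : nat -> nat -> R) u w :
  (forall i j, (ngen (kind D r) <= j)%N -> a i j = 0) ->
  \sum_(v : B) tensor_op r a u v * tensor_op r b v w
  = if agree_off r u w then \sum_(j < 4) a (val u r) j * b j (val w r) else 0.
Proof.
move=> a_out.
transitivity (\sum_(v : B) (if agree_off r u w then
    (if agree_off r u v then a (val u r) (val v r) * b (val v r) (val w r) else 0) else 0)).
  apply: eq_bigr => v _; rewrite /tensor_op.
  case: (boolP (agree_off r u v)) => uv; last by rewrite mul0r; case: ifP.
  case: (boolP (agree_off r v w)) => vw; last first.
    rewrite mulr0; case: ifP => // uw; case/negP: vw.
    by apply: agree_off_trans uw; rewrite agree_off_sym.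
  rewrite (agree_off_trans uv vw) (koszul_sign_agree r uv) ltnn mulr1.
  by rewrite mulrCA !mulrA sgnz_sqr mul1r.
case: ifP => _; last by rewrite big1.
apply: (@sum_agree_off r u (fun j => a (val u r) j * b j (val w r))) => j jr.
by rewrite a_out // mul0r.
Qed.

(* Composing operators on distinct factors r, p: the only intermediate
   vector is u with its r-th generator replaced by that of w. *)
Lemma tensor_op_comp_other r p (a b : nat -> nat -> R) u w : r != p ->
  \sum_(v : B) tensor_op r a u v * tensor_op p b v w
  = if agree_off p (set_gen r u (val w r)) w then
      koszul_sign r u * a (val u r) (val w r)
      * (koszul_sign p (set_gen r u (val w r)) * b (val u p) (val w p))
    else 0.
Proof.
move=> rp; set m := set_gen r u (val w r).
rewrite (eq_bigr (fun v => if agree_off r u v && agree_off p v w then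
    koszul_sign r u * a (val u r) (val v r) * (koszul_sign p v * b (val v p) (val w p))
    else 0)); last first.
  by move=> v _; rewrite /tensor_op; do 2![case: ifP => _]; rewrite ?mulr0 ?mul0r.
rewrite (@sum_if_unique _ _ _ _ m).
  by rewrite agree_off_set_gen !set_gen_at eqxx eq_sym (negbTE rp).
move=> v /andP [/agree_offP uv /agree_offP vw]; apply: val_inj; apply/ffunP => q.
rewrite set_gen_at; case: eqP => [->|/eqP qr]; last by rewrite uv.
by rewrite vw.
Qed.

Definition odd_at r (a : nat -> nat -> R) : Prop :=
  forall i j, a i j * (sgnz (loc_ideg (kind D r) i) * sgnz (loc_ideg (kind D r) j)) = - a i j.

Lemma tensor_op_anticomm r p (a b : nat -> nat -> R) u w :
  r != p -> odd_at r a -> odd_at p b ->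
  \sum_(v : B) tensor_op r a u v * tensor_op p b v w
  + \sum_(v : B) tensor_op p b u v * tensor_op r a v w = 0.
Proof.
move=> rp odd_a odd_b.
rewrite tensor_op_comp_other // tensor_op_comp_other 1?eq_sym //.
have swap : agree_off p (set_gen r u (val w r)) w = agree_off r (set_gen p u (val w p)) w.
  apply/agree_offP/agree_offP => h q qx; rewrite set_gen_at; case: eqP => [-> // | /eqP qy];
    by move: (h q qy); rewrite set_gen_at (negbTE qx).
rewrite swap; case: ifP => _; last by rewrite addr0.
rewrite (koszul_sign_agree p (agree_off_set_gen r u (val w r)))
        (koszul_sign_agree r (agree_off_set_gen p u (val w p))) !set_gen_at !eqxx.
case: (ltngtP r p) => [rp'|pr|req]; rewrite ?mulr1.
- exact: anticomm_cancel.
- by rewrite addrC; apply: anticomm_cancel.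
- by move: rp; rewrite (val_inj req) eqxx.
Qed.

End TensorFactor.

Definition piece_d (D : ddiag) (p : 'I_(npc D)) : nat -> nat -> {mpoly int[nreg D]} :=
  loc_dif (kind D p) (yvar D p 0) (yvar D p 1) (yvar D p 2) (yvar D p 3).

Definition piece_h (D : ddiag) (p : 'I_(npc D)) : nat -> nat -> {mpoly int[nreg D]} :=
  loc_h (kind D p) (yvar D p 0) (yvar D p 1) (yvar D p 2) (yvar D p 3).

Definition piece_scalar (D : ddiag) (p : 'I_(npc D)) : {mpoly int[nreg D]} :=
  loc_scalar (kind D p) (yvar D p 0) (yvar D p 1) (yvar D p 2) (yvar D p 3).

Definition piece_htpy (D : ddiag) (p : 'I_(npc D)) := tensor_op p (piece_h p).

Lemma CD_dif_tensor (D : ddiag) (u v : CDbasis D) :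
  CD_dif D u v = \sum_(r < npc D) tensor_op r (piece_d r) u v.
Proof. by []. Qed.

(* D H_p + H_p D = c_p: the p-th summand of D gives the local identity,
   the other summands anticommute with H_p. *)
Lemma piece_htpy_spec (D : ddiag) (p : 'I_(npc D)) (u w : CDbasis D) :
  \sum_(v : CDbasis D) CD_dif D u v * piece_htpy p v w
  + \sum_(v : CDbasis D) piece_htpy p u v * CD_dif D v w
  = if u == w then piece_scalar p else 0.
Proof.
transitivity (\sum_(r < npc D) (\sum_(v : CDbasis D) tensor_op r (piece_d r) u v * piece_htpy p v w
                    + \sum_(v : CDbasis D) piece_htpy p u v * tensor_op r (piece_d r) v w)).
  rewrite big_split /=; congr (_ + _); rewrite exchange_big; apply: eq_bigr => v _.
    by rewrite CD_dif_tensor mulr_suml.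
  by rewrite CD_dif_tensor mulr_sumr.
rewrite [\sum_(r < npc D) _](bigD1 p) //= [\sum_(r < npc D | r != p) _]big1 ?addr0;
  last by move=> r rp; apply: tensor_op_anticomm => // i j;
          [exact: loc_dif_odd | exact: loc_h_odd].
rewrite /piece_htpy !tensor_op_comp_same => [|i j|i j];
  [| exact: loc_h_out | exact: loc_dif_out].
case: (boolP (agree_off p u w)) => uw; last first.
  by rewrite addr0; case: eqP => // eq_uw; case/negP: uw; rewrite eq_uw; apply/agree_offP.
have gen_bound (x : CDbasis D) : (val x p < ngen (kind D p))%N by exact: (forallP (valP x) p).
rewrite -big_split /= loc_homotopy ?gen_bound //.
congr (if _ then _ else _); apply/eqP/eqP => [/val_inj eq_p | -> //].
exact: agree_off_eq uw eq_p.
Qed.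

Lemma xe_strand_succ (D : ddiag) (wfD : wf_ddiag D) (e e' : 'I_(ned D)) :
  strand_succ D e e' ->
  exists p, xe D e - xe D e' = piece_scalar p \/ xe D e - xe D e' = - piece_scalar p.
Proof.
rewrite /strand_succ; case tgt_e: (tgt D e) => [[p k]|] // /eqP src_e'.
case: wfD => _ _ tgt_lab src_lab _; exists p; rewrite /xe.
have [-> ->] := tgt_lab _ _ _ tgt_e; have [-> ->] := src_lab _ _ _ src_e'.
have labE (j : 'I_4) : 'X_(lab D p j) = yvar D p j by rewrite /yvar inord_val.
by rewrite !labE; apply: loc_strand_step.
Qed.

Definition in_scalar_span (D : ddiag) (x : {mpoly int[nreg D]}) : Prop :=
  exists z : 'I_(npc D) -> int, x = \sum_(p < npc D) piece_scalar p *~ z p.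

Lemma scalar_span0 (D : ddiag) : in_scalar_span (0 : {mpoly int[nreg D]}).
Proof. by exists (fun _ => 0); rewrite big1 // => p _; rewrite mulr0z. Qed.

Lemma scalar_spanD (D : ddiag) (x y : {mpoly int[nreg D]}) :
  in_scalar_span x -> in_scalar_span y -> in_scalar_span (x + y).
Proof.
move=> [zx ->] [zy ->]; exists (fun p => zx p + zy p).
by rewrite -big_split; apply: eq_bigr => p _; rewrite mulrzDr.
Qed.

Lemma scalar_spanN (D : ddiag) (x : {mpoly int[nreg D]}) :
  in_scalar_span x -> in_scalar_span (- x).
Proof.
move=> [z ->]; exists (fun p => - z p).
by rewrite -sumrN; apply: eq_bigr => p _; rewrite mulrNz.
Qed.

Lemma scalar_span_piece (D : ddiag) (p : 'I_(npc D)) : in_scalar_span (piece_scalar p).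
Proof.
exists (fun q => (q == p)%:Z); rewrite (bigD1 p) //= eqxx mulr1z big1 ?addr0 //.
by move=> q /negbTE ->; rewrite mulr0z.
Qed.

Lemma xe_diff_span (D : ddiag) (wfD : wf_ddiag D) (e f : 'I_(ned D)) :
  connect (strand_succ D) e f -> in_scalar_span (xe D e - xe D f).
Proof.
case/connectP => path_ef path_ef_ok ->.
elim: path_ef e path_ef_ok => [|e' path IH] e /=; first by rewrite subrr => _; exact: scalar_span0.
case/andP => succ_e path_ok.
rewrite (_ : xe D e - _ = (xe D e - xe D e') + (xe D e' - xe D (last e' path))); last by ring.
apply: scalar_spanD (IH _ path_ok).
have [p [->| ->]] := xe_strand_succ wfD succ_e; last apply: scalar_spanN;
  exact: scalar_span_piece.
Qed.

Lemma xe_same_strand_span (D : ddiag) (wfD : wf_ddiag D) (e f : 'I_(ned D)) (s : bool) :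
  connect (strand_succ D) e f \/ connect (strand_succ D) f e ->
  in_scalar_span ((-1) ^+ s * xe D e - (-1) ^+ s * xe D f).
Proof.
move=> same_strand; have span_ef : in_scalar_span (xe D e - xe D f).
  case: same_strand => [|/(xe_diff_span wfD) span_fe]; first exact: xe_diff_span.
  by rewrite -opprB; apply: scalar_spanN.
by rewrite -mulrBr; case: s; rewrite ?expr1 ?mulN1r ?expr0 ?mul1r //; apply: scalar_spanN.
Qed.

Definition htpy (D : ddiag) (z : 'I_(npc D) -> int) (u v : CDbasis D) : {mpoly int[nreg D]} :=
  \sum_(p < npc D) piece_htpy p u v *~ z p.

Lemma htpy_spec (D : ddiag) (z : 'I_(npc D) -> int) (u w : CDbasis D) :
  \sum_(v : CDbasis D) CD_dif D u v * htpy z v w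
  + \sum_(v : CDbasis D) htpy z u v * CD_dif D v w
  = if u == w then \sum_(p < npc D) piece_scalar p *~ z p else 0.
Proof.
transitivity (\sum_(p < npc D) (\sum_(v : CDbasis D) CD_dif D u v * piece_htpy p v w
                 + \sum_(v : CDbasis D) piece_htpy p u v * CD_dif D v w) *~ z p).
  under [RHS]eq_bigr => p _ do rewrite mulrzDl.
  rewrite big_split /= /htpy; congr (_ + _).
    under eq_bigr => v _ do rewrite mulr_sumr.
    rewrite exchange_big; apply: eq_bigr => p _; rewrite mulrz_suml.
    by apply: eq_bigr => v _; rewrite mulrzAr.
  under eq_bigr => v _ do rewrite mulr_suml.
  rewrite exchange_big; apply: eq_bigr => p _; rewrite mulrz_suml.
  by apply: eq_bigr => v _; rewrite mulrzAl.
under eq_bigr => p _ do rewrite piece_htpy_spec.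
by case: eqP => // _; rewrite big1 // => p _; rewrite mul0rz.
Qed.

Lemma piece_htpy_support (D : ddiag) (p : 'I_(npc D)) (u v : CDbasis D) :
  piece_htpy p u v != 0 -> agree_off p u v /\ val u p != val v p.
Proof.
rewrite /piece_htpy /tensor_op; case: ifP => [uv nz|_]; last by rewrite eqxx.
split=> //; apply: contraNneq nz => eq_p.
by rewrite /piece_h eq_p loc_h_diag mulr0.
Qed.

Lemma htpy_single (D : ddiag) (z : 'I_(npc D) -> int) (p : 'I_(npc D)) (u v : CDbasis D) :
  piece_htpy p u v != 0 -> htpy z u v = piece_htpy p u v *~ z p.
Proof.
case/piece_htpy_support => _ neq_p; rewrite /htpy (bigD1 p) //= big1 ?addr0 // => q qp.
rewrite /piece_htpy /tensor_op; case: ifP => [/agree_offP agree_q|_]; last by rewrite mul0rz.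
by case/negP: neq_p; rewrite agree_q // eq_sym.
Qed.

Lemma htpy_bideg (D : ddiag) (z : 'I_(npc D) -> int) (u v : CDbasis D) :
  htpy z u v != 0 ->
  (- (1%:Z) <= CD_fdeg D v - CD_fdeg D u)%R /\
  exists k : nat, htpy z u v \is k.-homog for mdeg /\
                  CD_ideg D v + 2 - 2 * k%:Z - CD_ideg D u = - k0.
Proof.
move=> nz; case: (pickP (fun p => piece_htpy p u v *~ z p != 0)) => [p nz_p | all0]; last first.
  by case/negP: nz; rewrite /htpy big1 // => p _; apply/eqP/negbFE/all0.
have nz_h : piece_htpy p u v != 0 by apply: contraNneq nz_p => ->; rewrite mul0rz.
rewrite (htpy_single z nz_h); have [uv _] := piece_htpy_support nz_h.
have nz_loc : piece_h p (val u p) (val v p) != 0.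
  by move: nz_h; rewrite /piece_htpy /tensor_op uv; apply: contraNneq => ->; rewrite mulr0.
have [fdeg [k [hom_k ideg]]] := loc_h_bideg nz_loc.
split; first by rewrite /CD_fdeg (sum_diff_agree_off (fun q i => loc_fdeg (kind D q) i) uv).
exists k; split.
  rewrite /piece_htpy /tensor_op uv /koszul_sign /sgnz.
  by case: ifP => _; rewrite ?mulN1r ?mul1r; apply: rpredMz; rewrite ?rpredN.
have := sum_diff_agree_off (fun q (i : 'I_4) => loc_ideg (kind D q) i) uv.
by move: ideg; rewrite /CD_ideg /k0 /=; lia.
Qed.

Lemma inRD0 (n : nat) : @inRD n 0.
Proof. by rewrite -(addrN 1); apply/RD_add/RD_opp; apply: RD_one. Qed.

Lemma inRD_mulrz (n : nat) (x : {mpoly int[n]}) (z : int) : inRD x -> inRD (x *~ z).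
Proof.
have inRD_muln (k : nat) : inRD x -> inRD (x *+ k).
  by move=> x_in; elim: k => [|k IH]; [rewrite mulr0n; apply: inRD0 | rewrite mulrS; apply: RD_add].
by case: z => k x_in; [apply: inRD_muln | apply/RD_opp/inRD_muln].
Qed.

Lemma inRD_sgnz (n : nat) (z : int) : @inRD n (sgnz z).
Proof. by rewrite /sgnz; case: ifP => _; [apply: RD_opp|]; apply: RD_one. Qed.

Lemma inRD_piece_h (D : ddiag) (p : 'I_(npc D)) (i j : nat) : inRD (piece_h p i j).
Proof.
have c_in : inRD (- (yvar D p 1 - yvar D p 2 + yvar D p 3 - yvar D p 0)).
  rewrite (_ : yvar D p 1 - _ + _ - _
             = (yvar D p 1 - yvar D p 2) + (yvar D p 3 - yvar D p 0)); last by ring.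
  by apply/RD_opp/RD_add; apply: RD_diff.
rewrite /piece_h; case: (kind D p); case: i => [|[|[|[|i]]]]; case: j => [|[|[|[|j]]]] /=;
  first [exact: inRD0 | exact: RD_one | exact: c_in].
Qed.

Lemma htpy_inRD (D : ddiag) (z : 'I_(npc D) -> int) (u v : CDbasis D) : inRD (htpy z u v).
Proof.
apply: (big_ind inRD); [exact: inRD0 | exact: RD_add | move=> p _; apply: inRD_mulrz].
rewrite /piece_htpy /tensor_op; case: ifP => _; last exact: inRD0.
by apply: RD_mul; [apply: inRD_sgnz | apply: inRD_piece_h].
Qed.

Unset Implicit Arguments.
Set Strict Implicit.

Theorem lemma4p2 (D : ddiag) (wfD : wf_ddiag D) (e f : 'I_(ned D)) (s : bool)
    (same_strand : connect (strand_succ D) e f \/ connect (strand_succ D) f e) :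
  n_homotopic (@inRD (nreg D)) 1 (CD D) 2
    (mulmx_map (mbas (CD D)) ((-1) ^+ s * xe D e))
    (mulmx_map (mbas (CD D)) ((-1) ^+ s * xe D f)).
Proof.
have [z span_z] := xe_same_strand_span wfD s same_strand.
exists (htpy z); split.
- exact: htpy_inRD.
- exact: htpy_bideg.
- move=> u w; rewrite /mulmx_map /= (_ : sgnz 2 = 1) // mul1r htpy_spec.
  by case: eqP => _; rewrite ?span_z ?subr0.
Qed.
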